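(* Let $J:[0,1]\to\mathbb{R}$ be continuous with $J(0)=J(1)=0$, twice differentiable on $(0,1)$ with $J''(p)<0$ for all $p\in(0,1)$. For $p_0,a\in(0,1)$ define the Bayes risk error divergence $$d(p_0\|a)=-J(p_0)+J(a)+(p_0-a)J'(a).$$ Fix a cell $[b_{k-1},b_k]$ with $0\le b_{k-1}<b_k\le 1$. Then the problem $$\min_{a\in(b_{k-1},b_k)}\ \max_{p_0\in[b_{k-1},b_k]} d(p_0\|a)$$ is solved by the (unique) point $a_k\in(b_{k-1},b_k)$ satisfying $$J'(a_k)=\frac{J(b_k)-J(b_{k-1})}{b_k-b_{k-1}}.$$
   Context: In binary hypothesis testing with prior $p_0=\Pr[H=h_0]$, costs $c_{10},c_{01}>0$ and deterministic likelihood ratio test decision rules, $J(p_0)=c_{10}p_0p_E^{\mathrm{I}}(p_0)+c_{01}(1-p_0)p_E^{\mathrm{II}}(p_0)$ is the Bayes risk, which is zero at $p_0\in\{0,1\}$, positive, continuous and strictly concave on $(0,1)$. A decision weight $a$ is the prior value used in the likelihood ratio test threshold; the mismatched Bayes risk is $J(p_0,a)=J(a)+(p_0-a)J'(a)$, and $d(p_0\|a)=J(p_0,a)-J(p_0)$. For the theorem only the stated analytic properties of $J$ are used. *)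

From Stdlib Require Import Reals Lra.
Open Scope R_scope.

Definition brd (J J' : R -> R) (p0 a : R) : R :=
  - J p0 + J a + (p0 - a) * J' a.

Definition is_max_on (S : R -> Prop) (f : R -> R) (m : R) : Prop :=
  (exists p, S p /\ f p = m) /\ (forall p, S p -> f p <= m).

(* On a cell [bl, br] the divergence d(p || a) = -J p + J a + (p - a) J'(a)
   is, as a function of p, the gap between the tangent line of J at a and J;
   it is convex in p, so its maximum over the cell sits at an endpoint.
   When J'(a) equals the chord slope s = (J br - J bl)/(br - bl) the two
   endpoint values coincide.  Moving a to the left of the chord point
   increases d(br || a), moving it to the right increases d(bl || a); hence
   the chord point minimises the maximal divergence.

   Everything reduces to two analytic facts: a mean value theorem for J on
   any subinterval of [0,1] (J is only continuous relative to [0,1], so we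
   apply the Stdlib MVT to J composed with a clamp onto the subinterval),
   and strict monotonicity of J' on (0,1) coming from J'' < 0.  The file
   first proves these, then the endpoint and monotonicity properties of
   d(p || a), and derives theorem1 from them. *)

From Stdlib Require Import Reals Lra.
Open Scope R_scope.

Definition clamp (x y t : R) : R := Rmax x (Rmin y t).

Lemma clamp_id x y t : x <= t <= y -> clamp x y t = t.
Proof. intros. unfold clamp, Rmax, Rmin; repeat destruct Rle_dec; lra. Qed.

Lemma clamp_range x y t : x <= y -> x <= clamp x y t <= y.
Proof. intros. unfold clamp, Rmax, Rmin; repeat destruct Rle_dec; lra. Qed.

Lemma clamp_contract x y t c :
  x <= y -> x <= c <= y -> Rabs (clamp x y t - c) <= Rabs (t - c).
Proof.
  intros. unfold clamp, Rmax, Rmin; repeat destruct Rle_dec;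
  unfold Rabs; repeat destruct Rcase_abs; lra.
Qed.

Lemma limit1_in_subset (f : R -> R) (D D' : R -> Prop) (l x0 : R) :
  (forall z, D' z -> D z) -> limit1_in f D l x0 -> limit1_in f D' l x0.
Proof.
  intros HD Hlim eps Heps.
  destruct (Hlim eps Heps) as [alp [Halp Hclose]].
  exists alp; split; [exact Halp |].
  intros z [Hz Hdist]; apply Hclose; split; [apply HD |]; assumption.
Qed.

Lemma clamp_continuity_pt (f : R -> R) x y t :
  x <= t <= y -> limit1_in f (fun z => x <= z <= y) (f t) t ->
  continuity_pt (fun s => f (clamp x y s)) t.
Proof.
  intros Ht Hlim eps Heps.
  destruct (Hlim eps Heps) as [alp [Halp Hclose]].
  exists alp; split; [exact Halp |].
  intros z [_ Hz]; simpl in *; unfold R_dist in *.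
  rewrite (clamp_id x y t) by lra.
  apply Hclose; split.
  - apply clamp_range; lra.
  - eapply Rle_lt_trans; [apply clamp_contract; lra | exact Hz].
Qed.

Lemma mvt_relative (f f' : R -> R) x y :
  x < y ->
  (forall t, x <= t <= y -> limit1_in f (fun z => x <= z <= y) (f t) t) ->
  (forall t, x < t < y -> derivable_pt_lim f t (f' t)) ->
  exists c, x < c < y /\ f y - f x = f' c * (y - x).
Proof.
  intros Hxy Hcont Hder.
  set (g := fun s => f (clamp x y s)).
  assert (Hgder : forall t, x < t < y -> derivable_pt_lim g t (f' t)).
  { intros t Ht.
    apply (derivable_pt_lim_locally_ext f g t x y); [exact Ht | | apply Hder, Ht].
    intros z Hz; unfold g; rewrite clamp_id; lra. }
  destruct (MVT g id x y (fun c P => exist _ (f' c) (Hgder c P))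
              (fun c _ => derivable_pt_id c) Hxy
              (fun c Hc => clamp_continuity_pt f x y c Hc (Hcont c Hc))
              (fun c _ => derivable_continuous_pt _ _ (derivable_pt_id c)))
    as [c [P Heq]].
  rewrite derive_pt_id in Heq; simpl in Heq.
  unfold g, id in Heq; rewrite !clamp_id in Heq by lra.
  exists c; split; [exact P | lra].
Qed.

Section BayesRisk.

Variables J J' J'' : R -> R.
Hypothesis Hcont : forall x, 0 <= x <= 1 -> limit1_in J (fun y => 0 <= y <= 1) (J x) x.
Hypothesis HJ' : forall p, 0 < p < 1 -> derivable_pt_lim J p (J' p).
Hypothesis HJ'' : forall p, 0 < p < 1 -> derivable_pt_lim J' p (J'' p).
Hypothesis Hconc : forall p, 0 < p < 1 -> J'' p < 0.

Lemma chord_slope x y : 0 <= x -> x < y -> y <= 1 ->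
  exists c, x < c < y /\ J y - J x = J' c * (y - x).
Proof.
  intros Hx Hxy Hy; apply mvt_relative; [exact Hxy | |].
  - intros t Ht; apply (limit1_in_subset J (fun z => 0 <= z <= 1)); [intros z Hz; lra |].
    apply Hcont; lra.
  - intros t Ht; apply HJ'; lra.
Qed.

Lemma J'_decreasing x y : 0 < x -> x < y -> y < 1 -> J' y < J' x.
Proof.
  intros Hx Hxy Hy.
  destruct (MVT_cor2 J' J'' x y) as [c [Heq Hc]]; [exact Hxy | |].
  - intros c Hc; apply HJ''; lra.
  - pose proof (Hconc c ltac:(lra)); nra.
Qed.

Lemma J'_injective x y : 0 < x < 1 -> 0 < y < 1 -> J' x = J' y -> x = y.
Proof.
  intros Hx Hy Heq.
  destruct (Rtotal_order x y) as [Hlt | [Hxy | Hgt]]; [| exact Hxy |].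
  - pose proof (J'_decreasing x y ltac:(lra) Hlt ltac:(lra)); lra.
  - pose proof (J'_decreasing y x ltac:(lra) Hgt ltac:(lra)); lra.
Qed.

(* Convexity of d(. || a): on a cell containing a, the divergence is
   bounded by its value at the left or at the right endpoint. *)
Lemma brd_le_endpoints bl br a p :
  0 <= bl -> br <= 1 -> bl < a < br -> bl <= p <= br ->
  brd J J' p a <= brd J J' bl a \/ brd J J' p a <= brd J J' br a.
Proof.
  intros Hbl Hbr Ha Hp; unfold brd.
  destruct (Rle_lt_dec p a) as [Hpa | Hap].
  - left. destruct (Req_dec p bl) as [-> | Hne]; [lra |].
    destruct (chord_slope bl p) as [c [Hc Hchord]]; try lra.
    pose proof (J'_decreasing c a ltac:(lra) ltac:(lra) ltac:(lra)); nra.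
  - right. destruct (Req_dec p br) as [-> | Hne]; [lra |].
    destruct (chord_slope p br) as [c [Hc Hchord]]; try lra.
    pose proof (J'_decreasing a c ltac:(lra) ltac:(lra) ltac:(lra)); nra.
Qed.

Lemma brd_left_increasing x u v :
  0 < u -> u <= v -> v < 1 -> x <= u ->
  brd J J' x u <= brd J J' x v.
Proof.
  intros Hu Huv Hv Hxu; unfold brd.
  destruct (Req_dec u v) as [-> | Hne]; [lra |].
  destruct (chord_slope u v) as [c [Hc Hchord]]; try lra.
  pose proof (J'_decreasing c v ltac:(lra) ltac:(lra) ltac:(lra)).
  pose proof (J'_decreasing u v ltac:(lra) ltac:(lra) ltac:(lra)).
  nra.
Qed.

Lemma brd_right_decreasing y u v :
  0 < u -> u <= v -> v < 1 -> v <= y ->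
  brd J J' y v <= brd J J' y u.
Proof.
  intros Hu Huv Hv Hvy; unfold brd.
  destruct (Req_dec u v) as [-> | Hne]; [lra |].
  destruct (chord_slope u v) as [c [Hc Hchord]]; try lra.
  pose proof (J'_decreasing u c ltac:(lra) ltac:(lra) ltac:(lra)).
  pose proof (J'_decreasing u v ltac:(lra) ltac:(lra) ltac:(lra)).
  nra.
Qed.

Lemma brd_endpoints_equal bl br a :
  bl < br -> J' a = (J br - J bl) / (br - bl) ->
  brd J J' bl a = brd J J' br a.
Proof.
  intros Hb Hs; unfold brd.
  assert (Hchord : J br - J bl = J' a * (br - bl)) by (rewrite Hs; field; lra).
  lra.
Qed.

End BayesRisk.

Theorem theorem1 (J J' J'' : R -> R)
  (* J continuous on [0,1] (relative to [0,1]) *)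
  (Hcont : forall x, 0 <= x <= 1 -> limit1_in J (fun y => 0 <= y <= 1) (J x) x)
  (H0 : J 0 = 0) (H1 : J 1 = 0)
  (* J twice differentiable on (0,1), with derivative J' and second derivative J'' *)
  (HJ' : forall p, 0 < p < 1 -> derivable_pt_lim J p (J' p))
  (HJ'' : forall p, 0 < p < 1 -> derivable_pt_lim J' p (J'' p))
  (Hconc : forall p, 0 < p < 1 -> J'' p < 0)
  (bl br : R) (Hb0 : 0 <= bl) (Hb : bl < br) (Hb1 : br <= 1) :
  exists ak,
    (bl < ak < br
     /\ J' ak = (J br - J bl) / (br - bl)
     /\ (exists M, is_max_on (fun p => bl <= p <= br) (fun p => brd J J' p ak) M
           /\ forall a Ma, bl < a < br ->
                is_max_on (fun p => bl <= p <= br) (fun p => brd J J' p a) Ma ->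
                M <= Ma))
    /\ (forall a', bl < a' < br -> J' a' = (J br - J bl) / (br - bl) -> a' = ak).
Proof.
  destruct (chord_slope J J' Hcont HJ' bl br Hb0 Hb Hb1) as [ak [Hak Hchord]].
  assert (Hslope : J' ak = (J br - J bl) / (br - bl)) by (rewrite Hchord; field; lra).
  pose proof (brd_endpoints_equal J J' bl br ak Hb Hslope) as Heq.
  exists ak; split; [split; [exact Hak | split; [exact Hslope |]] |].
  - exists (brd J J' bl ak); split; [split |].
    + exists bl; split; [lra | reflexivity].
    + intros p Hp.
      destruct (brd_le_endpoints J J' J'' Hcont HJ' HJ'' Hconc bl br ak p)
        as [Hle | Hle]; lra.
    + intros a Ma Ha [_ Hmax].
      destruct (Rle_lt_dec a ak) as [Hle | Hlt].
      * rewrite Heq; apply (Rle_trans _ (brd J J' br a)); [| apply Hmax; lra].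
        apply (brd_right_decreasing J J' J'' Hcont HJ' HJ'' Hconc); lra.
      * apply (Rle_trans _ (brd J J' bl a)); [| apply Hmax; lra].
        apply (brd_left_increasing J J' J'' Hcont HJ' HJ'' Hconc); lra.
  - intros a' Ha' Hslope'.
    apply (J'_injective J' J'' HJ'' Hconc); [lra | lra | congruence].
Qed.
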